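(* Let $q$ be a prime power, $\beta$ a primitive element of $\mathbb{F}_{q^2}$, $\mathrm{Tr}(x)=x+x^q$, and $\Psi:\mathbb{F}_{q^2}^n\to\mathbb{F}_q^{2n}$, $\Psi(\alpha_0,\ldots,\alpha_{n-1})=\left(\mathrm{Tr}(\beta\alpha_0),\ldots,\mathrm{Tr}(\beta\alpha_{n-1}),\mathrm{Tr}(\beta^q\alpha_0),\ldots,\mathrm{Tr}(\beta^q\alpha_{n-1})\right)$. Let $g(x)\in\mathbb{F}_q[x]$ be a monic divisor of $x^{2n}-1$ with $g(x)\neq x^{2n}-1$ and $k=\deg g$, let $\mathscr{D}=\langle g(x)\rangle$ be the $q$-ary linear cyclic code of length $2n$ it generates, and $\mathscr{C}=\Psi^{-1}(\mathscr{D})$. Let $h(x)=(x^{2n}-1)/g(x)=h_0+\cdots+h_{2n-k}x^{2n-k}$, $h^*(x)=\frac{1}{h_{2n-k}}x^{2n-k}h(1/x)$, and $V_{h^*(x)}\in\mathbb{F}_q^{2n}$ its coefficient vector. Then the $k$ vectors $\Psi^{-1}(\tau(\sigma^{i}(V_{h^*(x)})))$, $0\le i\le k-1$, form an $\mathbb{F}_q$-basis of the alternating dual $\mathscr{C}^{\perp_a}$ (i.e., they are the rows of an additive generator matrix of $\mathscr{C}^{\perp_a}$).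
   Context: $\sigma(v_0,\ldots,v_{2n-1})=(v_{2n-1},v_0,\ldots,v_{2n-2})$ and $\tau(v_0,\ldots,v_{2n-1})=(-v_n,\ldots,-v_{2n-1},v_0,\ldots,v_{n-1})$. The alternating inner product on $\mathbb{F}_{q^2}^n$ is $\langle u,v\rangle_a=(\beta^{2q}-\beta^2)\sum_{i=0}^{n-1}(u_iv_i^q-u_i^qv_i)$ and $\mathscr{C}^{\perp_a}=\{v\in\mathbb{F}_{q^2}^n:\langle u,v\rangle_a=0\ \forall u\in\mathscr{C}\}$. Vectors of $\mathbb{F}_q^{2n}$ are identified with polynomials of degree $<2n$ modulo $x^{2n}-1$. *)

From HB Require Import structures.
From mathcomp Require Import all_boot all_order all_algebra all_field.
Set Implicit Arguments. Unset Strict Implicit. Unset Printing Implicit Defensive.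
Import GRing.Theory.
Local Open Scope ring_scope.

(* F_{q^2} is modelled as a finite field L with #|L| = q^2; F_q is the
   subfield {x | x^q = x} of L.  Vectors of F_q^m are rows 'rV[L]_m whose
   entries lie in F_q. *)

Definition inFq (L : fieldType) (q : nat) (x : L) : bool := x ^+ q == x.

Definition vget (R : nzRingType) (m : nat) (v : 'rV[R]_m) (j : nat) : R :=
  match @insub nat (fun j => j < m)%N 'I_m j with
  | Some i => v 0 i | None => 0 end.

Definition Tr (L : fieldType) (q : nat) (x : L) : L := x + x ^+ q.

Definition Psi (L : fieldType) (q n : nat) (beta : L) (a : 'rV[L]_n)
  : 'rV[L]_(2 * n) :=
  \row_(j < 2 * n) (if (j < n)%N then Tr q (beta * vget a j)
                    else Tr q (beta ^+ q * vget a (j - n))).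

Definition sigma (R : nzRingType) (m : nat) (v : 'rV[R]_m) : 'rV[R]_m :=
  \row_(j < m) vget v ((j + m - 1) %% m).

Definition tau (R : nzRingType) (n : nat) (v : 'rV[R]_(2 * n)) : 'rV[R]_(2 * n) :=
  \row_(j < 2 * n) (if (j < n)%N then - vget v (j + n) else vget v (j - n)).

Definition vpoly (R : nzRingType) (m : nat) (v : 'rV[R]_m) : {poly R} :=
  \poly_(j < m) vget v j.

Definition inD (L : fieldType) (q n : nat) (g : {poly L}) (v : 'rV[L]_(2 * n)) : Prop :=
  (forall j, inFq q (v 0 j)) /\
  exists a : {poly L}, (forall i, inFq q a`_i) /\
    vpoly v = (a * g) %% ('X^(2 * n) - 1).

Definition inC (L : fieldType) (q n : nat) (beta : L) (g : {poly L}) (u : 'rV[L]_n) : Prop :=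
  inD q g (Psi q beta u).

Definition altip (L : fieldType) (q n : nat) (beta : L) (u v : 'rV[L]_n) : L :=
  (beta ^+ (2 * q) - beta ^+ 2) *
    \sum_(i < n) (u 0 i * v 0 i ^+ q - u 0 i ^+ q * v 0 i).

Definition altdual (L : fieldType) (q n : nat) (beta : L) (g : {poly L}) (v : 'rV[L]_n) : Prop :=
  forall u, inC q beta g u -> altip q beta u v = 0.

Definition hpoly (L : fieldType) (n : nat) (g : {poly L}) : {poly L} :=
  ('X^(2 * n) - 1) %/ g.

Definition hstar (L : fieldType) (n : nat) (g : {poly L}) : {poly L} :=
  let h := hpoly n g in
  let d := (size h).-1 in
  (lead_coef h)^-1 *: \poly_(j < d.+1) h`_(d - j).

Definition Vhstar (L : fieldType) (n : nat) (g : {poly L}) : 'rV[L]_(2 * n) :=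
  \row_(j < 2 * n) (hstar n g)`_j.

Definition Fq_basis (L : fieldType) (q n k : nat) (S : 'rV[L]_n -> Prop)
  (ws : 'I_k -> 'rV[L]_n) : Prop :=
  [/\ forall i, S (ws i),
      forall c : 'I_k -> L, (forall i, inFq q (c i)) ->
        \sum_(i < k) c i *: ws i = 0 -> forall i, c i = 0 &
      forall v, S v -> exists c : 'I_k -> L,
        (forall i, inFq q (c i)) /\ v = \sum_(i < k) c i *: ws i].

From HB Require Import structures.
From mathcomp Require Import all_boot all_order all_algebra all_field.
From mathcomp Require Import zify ring.
Set Implicit Arguments. Unset Strict Implicit. Unset Printing Implicit Defensive.
Import GRing.Theory.
Local Open Scope ring_scope.

(* Psi is an F_q-linear bijection from F_{q^2}^n onto F_q^{2n} (the pair
   Tr(beta x), Tr(beta^q x) determines x because beta^{2q} <> beta^2), and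
   <u, v>_a = Psi(u) . tau(Psi(v)).  Hence the alternating dual of
   C = Psi^{-1}(D) is Psi^{-1}(tau(D^perp)), and it remains to see that the
   shifts x^i h^*(x), i < k, form a basis of the Euclidean dual of the cyclic
   code D = <g(x)>.  They are orthogonal to D because c(x) h(x) is divisible
   by x^{2n} - 1 for every codeword c(x), so its middle coefficients vanish;
   they are independent because h^* <> 0; and a word orthogonal to D, reduced
   modulo h^*, leaves a remainder of degree < 2n - k orthogonal to every
   x^j g(x), which forces it to vanish because g(0) <> 0. *)

Section FrobeniusFq.
Variables (L : finFieldType) (q : nat).
Hypothesis pchar_q : [pchar L].-nat q.
Hypothesis card_L : #|L| = (q ^ 2)%N.

Definition frobq (x : L) := x ^+ q.

Lemma frobq_is_nmod : nmod_morphism frobq.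
Proof.
split=> [|x y]; last exact: exprDn_pchar.
by rewrite /frobq expr0n; case/andP: pchar_q; case: q.
Qed.

Lemma frobq_is_monoid : monoid_morphism frobq.
Proof. by split=> [|x y]; rewrite /frobq ?expr1n ?exprMn. Qed.

HB.instance Definition _ := GRing.isNmodMorphism.Build L L frobq frobq_is_nmod.
HB.instance Definition _ := GRing.isMonoidMorphism.Build L L frobq frobq_is_monoid.

Lemma exprqK (x : L) : (x ^+ q) ^+ q = x.
Proof. by rewrite -exprM mulnn -card_L expf_card. Qed.

Lemma inFq0 : inFq q (0 : L).
Proof. by rewrite /inFq -/(frobq 0) rmorph0. Qed.

Lemma inFqD (x y : L) : inFq q x -> inFq q y -> inFq q (x + y).
Proof. by rewrite /inFq exprDn_pchar // => /eqP-> /eqP->. Qed.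

Lemma inFqN (x : L) : inFq q x -> inFq q (- x).
Proof. by rewrite /inFq exprNn_pchar // => /eqP->. Qed.

Lemma inFq_nat m : inFq q (m%:R : L).
Proof. by rewrite /inFq -/(frobq _) rmorph_nat. Qed.

Lemma inFq_cofactor (a b c : {poly L}) : a != 0 -> a * b = c ->
  (forall i, inFq q a`_i) -> (forall i, inFq q c`_i) -> forall i, inFq q b`_i.
Proof.
move=> a_neq0 abc a_Fq c_Fq i; apply/eqP.
have map_frobq_id (p : {poly L}) : (forall i, inFq q p`_i) -> map_poly frobq p = p.
  by move=> p_Fq; apply/polyP => j; rewrite coef_map; apply/eqP/p_Fq.
have : a * map_poly frobq b = a * b.
  by rewrite -{1}(map_frobq_id a a_Fq) -rmorphM /= abc map_frobq_id.
by move/(mulfI a_neq0) => fb_b; rewrite -[in RHS]fb_b coef_map.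
Qed.

End FrobeniusFq.

Section RowVectors.
Variables (R : nzRingType) (m : nat).
Implicit Types v w : 'rV[R]_m.

Lemma vget_lt v j (lt_jm : (j < m)%N) : vget v j = v 0 (Ordinal lt_jm).
Proof. by rewrite /vget insubT. Qed.

Lemma vgetE v (i : 'I_m) : vget v i = v 0 i.
Proof. by rewrite (vget_lt v (ltn_ord i)); congr (v 0 _); apply: val_inj. Qed.

Lemma vget_ge v j : (m <= j)%N -> vget v j = 0.
Proof. by move=> le_mj; rewrite /vget insubF // ltnNge le_mj. Qed.

Lemma vget_row (E : nat -> R) j :
  vget (\row_(i < m) E i) j = if (j < m)%N then E j else 0.
Proof. by case: ltnP => lt_jm; [rewrite (vget_lt _ lt_jm) mxE | apply: vget_ge]. Qed.

Lemma vget_ext v w : (forall j, (j < m)%N -> vget v j = vget w j) -> v = w.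
Proof. by move=> vw; apply/rowP => i; rewrite -!vgetE vw. Qed.

Lemma vget_linear j (a : R) v w : vget (a *: v + w) j = a * vget v j + vget w j.
Proof.
case: (ltnP j m) => lt_jm; last by rewrite !vget_ge ?mulr0 ?addr0.
by rewrite !(vget_lt _ lt_jm) !mxE.
Qed.

Lemma vget0 j : vget (0 : 'rV[R]_m) j = 0.
Proof. by case: (ltnP j m) => [lt_jm | /vget_ge //]; rewrite (vget_lt _ lt_jm) mxE. Qed.

Lemma vgetN v j : vget (- v) j = - vget v j.
Proof. by rewrite -[- v]addr0 -scaleN1r vget_linear vget0 addr0 mulN1r. Qed.

Lemma coef_vpoly v j : (vpoly v)`_j = vget v j.
Proof. by rewrite coef_poly; case: ltnP => // le_mj; rewrite vget_ge. Qed.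

Lemma vpoly_is_linear : linear (@vpoly R m).
Proof.
by move=> a v w; apply/polyP => j; rewrite coefD coefZ !coef_vpoly vget_linear.
Qed.

HB.instance Definition _ :=
  GRing.isLinear.Build R 'rV[R]_m {poly R} _ (@vpoly R m) vpoly_is_linear.

Lemma vpoly_inj : injective (@vpoly R m).
Proof. by move=> v w vw; apply: vget_ext => j _; rewrite -!coef_vpoly vw. Qed.

Lemma vpoly_row (p : {poly R}) : (size p <= m)%N -> vpoly (\row_(j < m) p`_j) = p.
Proof.
move=> le_pm; apply/polyP => j; rewrite coef_vpoly vget_row.
by case: ltnP => // le_mj; rewrite nth_default //; apply: leq_trans le_mj.
Qed.

Lemma vget_sigma v j : (j < m)%N -> vget (sigma v) j = vget v ((j + m - 1) %% m).
Proof. by move=> lt_jm; rewrite /sigma (vget_lt _ lt_jm) mxE. Qed.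

End RowVectors.

Section Tau.
Variables (R : nzRingType) (n : nat).
Implicit Types w : 'rV[R]_(2 * n).

Lemma vget_tau w j : vget (tau w) j =
  if (j < n)%N then - vget w (j + n) else if (j < 2 * n)%N then vget w (j - n) else 0.
Proof.
case: (ltnP j (2 * n)) => lt_jN; last by rewrite vget_ge // !ifF //; lia.
by rewrite /tau (vget_lt _ lt_jN) mxE.
Qed.

Lemma tau_is_linear : linear (@tau R n).
Proof.
move=> a w w'; apply: vget_ext => j _; rewrite vget_linear !vget_tau !vget_linear.
by case: ifP => _; [rewrite opprD mulrN | case: ifP => _; rewrite ?mulr0 ?addr0].
Qed.

HB.instance Definition _ :=
  GRing.isLinear.Build R 'rV[R]_(2 * n) 'rV[R]_(2 * n) _ (@tau R n) tau_is_linear.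

Lemma tau_tau w : tau (tau w) = - w.
Proof.
apply: vget_ext => j lt_jN; rewrite vgetN !vget_tau.
case: ltnP => [lt_jn | le_nj].
  rewrite ifF ?ifT ?addnK //; lia.
by rewrite lt_jN ifT ?subnK //; lia.
Qed.

Lemma tau_inj : injective (@tau R n).
Proof. by move=> w w' /(congr1 (@tau R n)); rewrite !tau_tau => /oppr_inj. Qed.

End Tau.

Definition pdot (R : nzRingType) (N : nat) (p r : {poly R}) : R :=
  \sum_(0 <= t < N) p`_t * r`_t.

Section PolyDot.
Variables (R : comNzRingType) (N : nat).

Lemma pdotC (p r : {poly R}) : pdot N p r = pdot N r p.
Proof. by apply: eq_bigr => t _; rewrite mulrC. Qed.

Lemma pdotBl (p p' r : {poly R}) : pdot N (p - p') r = pdot N p r - pdot N p' r.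
Proof. by rewrite /pdot -sumrB; apply: eq_bigr => t _; rewrite coefB mulrBl. Qed.

Lemma pdot_sumr (p : {poly R}) k (c : 'I_k -> R) (F : 'I_k -> {poly R}) :
  pdot N p (\sum_(i < k) c i *: F i) = \sum_(i < k) c i * pdot N p (F i).
Proof.
rewrite /pdot; under eq_bigr => t _ do rewrite coef_sum mulr_sumr.
rewrite exchange_big; apply: eq_bigr => i _.
by rewrite mulr_sumr; apply: eq_bigr => t _; rewrite coefZ mulrCA.
Qed.

End PolyDot.

Section ShiftsOfPolynomials.
Variable R : nzRingType.

Lemma coefK_leq k (p : {poly R}) : (size p <= k)%N -> \poly_(i < k) p`_i = p.
Proof.
move=> le_pk; apply/polyP => t; rewrite coef_poly.
by case: ltnP => // le_kt; rewrite nth_default //; apply: leq_trans le_kt.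
Qed.

Lemma poly_mull k (c : nat -> R) (p : {poly R}) :
  (\poly_(i < k) c i) * p = \sum_(i < k) c i *: ('X^i * p).
Proof. by rewrite poly_def mulr_suml; apply: eq_bigr => i _; rewrite scalerAl. Qed.

Lemma size_XnM_leq i (p : {poly R}) : (size ('X^i * p)%R <= size p + i)%N.
Proof. by apply: leq_trans (size_polyMleq _ _) _; rewrite size_polyXn addSn addnC. Qed.

Variable m : nat.

Lemma vpoly_sigma (v : 'rV[R]_m) :
  (size (vpoly v) < m)%N -> vpoly (sigma v) = 'X * vpoly v.
Proof.
move=> lt_vm; apply/polyP => j; rewrite coef_vpoly coefXM.
have vanish i : (m <= i.+1)%N -> (vpoly v)`_i = 0.
  by move=> le_mi; apply: nth_default; rewrite -ltnS (leq_trans lt_vm).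
case: (posnP j) => [-> | j_gt0] /=.
  by rewrite vget_sigma ?add0n ?modn_small -?coef_vpoly ?vanish //; lia.
case: (ltnP j m) => [lt_jm | le_mj]; last by rewrite vget_ge ?vanish //; lia.
rewrite vget_sigma // -coef_vpoly; congr (_`_ _).
by rewrite (_ : (j + m - 1 = j.-1 + m)%N) ?modnDr ?modn_small //; lia.
Qed.

Lemma vpoly_iter_sigma (p : {poly R}) i : (size p + i <= m)%N ->
  vpoly (iter i (@sigma R m) (\row_(t < m) p`_t)) = 'X^i * p.
Proof.
elim: i => [|i IH] le_pim; first by rewrite mul1r vpoly_row // -(addn0 (size p)).
have vIH : vpoly (iter i (@sigma R m) (\row_(t < m) p`_t)) = 'X^i * p by apply: IH; lia.
rewrite iterS vpoly_sigma vIH; first by rewrite exprS mulrA.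
by apply: leq_ltn_trans (size_XnM_leq i p) _; lia.
Qed.

End ShiftsOfPolynomials.

Lemma sum_shifts_eq0 (R : idomainType) k (c : 'I_k -> R) (p : {poly R}) : p != 0 ->
  \sum_(i < k) c i *: ('X^i * p) = 0 -> forall i, c i = 0.
Proof.
move=> p_neq0; under eq_bigr => i _ do rewrite scalerAl.
rewrite -mulr_suml => /eqP; rewrite mulf_eq0 (negbTE p_neq0) orbF => /eqP sum0 i.
have := congr1 (fun r : {poly R} => r`_i) sum0; rewrite coef0 coef_sum (bigD1 i) //=.
rewrite coefZ coefXn eqxx mulr1 big1 ?addr0 // => j ji.
by rewrite coefZ coefXn eq_sym (negbTE (ji : val j != i)) mulr0.
Qed.

Lemma size_Xn_sub1 (R : nzRingType) m : (0 < m)%N -> size ('X^m - 1 : {poly R}) = m.+1.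
Proof. by move=> m_gt0; rewrite -polyC1 size_XnsubC. Qed.

Section CyclicDual.
Variables (L : fieldType) (n : nat) (g : {poly L}) (k : nat).

Local Notation N := (2 * n)%N.
Local Notation m := (2 * n - k)%N.
Local Notation h := (hpoly n g).
Local Notation hs := (hstar n g).

Hypothesis g_dvd : g %| 'X^N - 1.

Lemma hpolyM : h * g = 'X^N - 1.
Proof. exact: divpK. Qed.

Hypothesis n_gt0 : (0 < n)%N.

Let N_gt0 : (0 < N)%N := leq_trans n_gt0 (leq_pmull n (isT : (0 < 2)%N)).

Lemma coef0_hpoly_g_neq0 : (h`_0 != 0) && (g`_0 != 0).
Proof.
rewrite -negb_or -mulf_eq0 -coef0M hpolyM coefB coefXn coef1 eqxx.
have -> : (0 == N)%N = false by rewrite eq_sym gtn_eqF.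
by rewrite mulr0n mulr1n sub0r oppr_eq0 oner_eq0.
Qed.

Hypothesis g_monic : g \is monic.

Lemma lead_coef_hpoly : lead_coef h = 1.
Proof.
have := lead_coefXnsubC (R := L) 1 N_gt0.
by rewrite polyC1 -hpolyM lead_coefM (monicP g_monic) mulr1.
Qed.

Hypothesis size_g : size g = k.+1.

Lemma hpoly_neq0 : h != 0.
Proof.
apply: contra_eq_neq (size_Xn_sub1 L N_gt0) => h0.
by rewrite -hpolyM h0 mul0r size_poly0.
Qed.

Lemma size_hpoly_add : (size h + k = N.+1)%N.
Proof.
rewrite -(size_Xn_sub1 L N_gt0) -hpolyM size_mul ?hpoly_neq0 ?monic_neq0 //.
by rewrite size_g addnS.
Qed.

Lemma leq_k_2n : (k <= N)%N.
Proof. by have := size_hpoly_add; have := size_poly_gt0 h; rewrite hpoly_neq0; lia. Qed.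

Lemma size_hpoly : size h = m.+1.
Proof. by have := size_hpoly_add; have := leq_k_2n; lia. Qed.

Lemma coef_hstar j : hs`_j = if (j <= m)%N then h`_(m - j) else 0.
Proof. by rewrite /hstar lead_coef_hpoly invr1 scale1r coef_poly size_hpoly. Qed.

Lemma size_hstar : size hs = m.+1.
Proof.
apply/eqP; rewrite eqn_leq; apply/andP; split.
  by apply/leq_sizeP => j lt_mj; rewrite coef_hstar ifF //; lia.
rewrite ltnNge; apply/negP => /leq_sizeP/(_ m (leqnn m)).
by rewrite coef_hstar leqnn subnn; apply/eqP; case/andP: coef0_hpoly_g_neq0.
Qed.

Lemma hstar_neq0 : hs != 0.
Proof. by rewrite -size_poly_eq0 size_hstar. Qed.

(* The coefficient of x^(m+i) in U h is the dot product of U with x^i h^*(x). *)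
Lemma pdot_Xn_hstar (U : {poly L}) i : (size U <= N)%N -> ('X^N - 1) %| U * h ->
  (i < k)%N -> pdot N U ('X^i * hs) = 0.
Proof.
move=> le_UN dvd_Uh lt_ik; have le_kN := leq_k_2n.
have -> : pdot N U ('X^i * hs) = (U * h)`_(m + i).
  rewrite /pdot coefM (big_cat_nat _ (n := (m + i).+1)) //=; last lia.
  rewrite [X in _ + X]big1_seq ?addr0 => [|j /andP[_]]; last first.
    rewrite mem_index_iota => /andP[lt_mij _].
    by rewrite coefXnM coef_hstar !ifF ?mulr0 //; lia.
  rewrite big_mkord; apply: eq_bigr => j _; rewrite coefXnM coef_hstar.
  have [lt_ji | le_ij] := ltnP j i.
    rewrite /= [h`_ _]nth_default ?mulr0 //; rewrite size_hpoly; lia.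
  have := ltn_ord j => lt_j_mi; rewrite ifT; last lia.
  by have -> : (m - (j - i) = m + i - j)%N by lia.
have [s Uh] := dvdpP _ _ dvd_Uh.
have le_sm : (size s <= m)%N.
  have [-> | s_neq0] := eqVneq s 0; first by rewrite size_poly0.
  have size_sX : size (s * ('X^N - 1)) = (size s + N)%N.
    by rewrite size_mul ?size_Xn_sub1 ?addnS // -size_poly_eq0 size_Xn_sub1.
  have le_Uh : (size (U * h)%R <= size U + m)%N.
    by apply: leq_trans (size_polyMleq U h) _; rewrite size_hpoly addnS.
  by move: le_Uh; rewrite Uh size_sX; lia.
rewrite Uh mulrBr mulr1 coefB coefMXn ifT; last lia.
by rewrite nth_default ?subrr // (leq_trans le_sm) ?leq_addr.
Qed.

Lemma pdot_hstar_mul (U c : {poly L}) : (size U <= N)%N -> ('X^N - 1) %| U * h ->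
  (size c <= k)%N -> pdot N U (c * hs) = 0.
Proof.
move=> le_UN dvd_Uh le_ck; rewrite -(coefK_leq le_ck) poly_mull pdot_sumr.
by rewrite big1 // => i _; rewrite pdot_Xn_hstar ?mulr0.
Qed.

Lemma pdot_code_hstar (a c : {poly L}) : (size c <= k)%N ->
  pdot N ((a * g) %% ('X^N - 1)) (c * hs) = 0.
Proof.
move=> le_ck; apply: pdot_hstar_mul le_ck.
  by rewrite -ltnS -(size_Xn_sub1 L N_gt0) ltn_modp -size_poly_eq0 size_Xn_sub1.
apply/dvdpP; exists (a - (a * g) %/ ('X^N - 1) * h).
have -> : (a * g) %% ('X^N - 1) = a * g - (a * g) %/ ('X^N - 1) * ('X^N - 1).
  by apply/eqP; rewrite eq_sym subr_eq addrC -divp_eq.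
by rewrite -hpolyM; ring.
Qed.

(* Triangularity: the dot product with x^j g(x), j = deg r, isolates the
   leading coefficient of r times g(0) != 0. *)
Lemma pdot_shifts_g_eq0 (r : {poly L}) : (size r <= m)%N ->
  (forall j, (j < m)%N -> pdot N r ('X^j * g) = 0) -> r = 0.
Proof.
move=> le_rm r_orth; apply/eqP; apply: contraT => r_neq0.
have size_r_gt0 : (0 < size r)%N by rewrite size_poly_gt0.
set d := (size r).-1.
have lt_dm : (d < m)%N by rewrite /d; lia.
have := r_orth d lt_dm; rewrite /pdot (bigD1_seq d) /=; first last.
- exact: iota_uniq.
- by rewrite mem_index_iota; have := leq_k_2n; lia.
rewrite big1_seq ?addr0 => [|t /andP[t_neq_d _]]; last first.
  rewrite coefXnM; case: ltnP => [|le_dt]; first by rewrite mulr0.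
  have : (d < t)%N by rewrite ltn_neqAle eq_sym t_neq_d.
  rewrite /d => lt_dt; have le_rt : (size r <= t)%N by lia.
  by rewrite (nth_default _ le_rt) mul0r.
rewrite coefXnM ltnn subnn => /eqP; rewrite mulf_eq0 -/(lead_coef r) lead_coef_eq0.
by rewrite (negbTE r_neq0) /=; case/andP: coef0_hpoly_g_neq0 => _ /negbTE->.
Qed.

Lemma hstar_span (Y : {poly L}) : (size Y <= N)%N ->
  (forall j, (j < m)%N -> pdot N Y ('X^j * g) = 0) ->
  exists2 c : {poly L}, (size c <= k)%N & Y = c * hs.
Proof.
move=> le_YN Y_orth; have le_kN := leq_k_2n.
set c := Y %/ hs; have le_ck : (size c <= k)%N.
  by rewrite size_divp ?hstar_neq0 // size_hstar leq_subLR (leq_trans le_YN) //; lia.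
exists c => //; suff r0 : Y %% hs = 0 by rewrite {1}(divp_eq Y hs) r0 addr0.
apply: pdot_shifts_g_eq0 => [|j lt_jm].
  by rewrite -ltnS -size_hstar ltn_modp hstar_neq0.
have -> : Y %% hs = Y - c * hs by apply/eqP; rewrite eq_sym subr_eq addrC -divp_eq.
rewrite pdotBl Y_orth // pdotC pdot_hstar_mul ?subr0 //.
  by apply: leq_trans (size_XnM_leq _ _) _; rewrite size_g; lia.
by rewrite -mulrA [g * h]mulrC hpolyM dvdp_mull.
Qed.

Lemma vpoly_iter_sigma_Vhstar i : (i < k)%N ->
  vpoly (iter i (@sigma L N) (Vhstar n g)) = 'X^i * hs.
Proof.
by move=> lt_ik; apply: vpoly_iter_sigma; rewrite size_hstar; have := leq_k_2n; lia.
Qed.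

Lemma vpoly_sum_shifts (c : 'I_k -> L) :
  vpoly (\sum_(i < k) c i *: iter i (@sigma L N) (Vhstar n g)) =
  \sum_(i < k) c i *: ('X^i * hs).
Proof.
rewrite linear_sum; apply: eq_bigr => i _.
by rewrite linearZ /= vpoly_iter_sigma_Vhstar.
Qed.

End CyclicDual.

Lemma vget_Psi (L : fieldType) q n beta (u : 'rV[L]_n) j :
  vget (Psi q beta u) j = if (j < n)%N then Tr q (beta * vget u j)
     else if (j < 2 * n)%N then Tr q (beta ^+ q * vget u (j - n)) else 0.
Proof.
case: (ltnP j (2 * n)) => lt_jN; last by rewrite vget_ge // !ifF //; lia.
by rewrite /Psi (vget_lt _ lt_jN) mxE.
Qed.

Section TraceAndPsi.
Variables (L : finFieldType) (q n : nat) (beta : L).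

Local Notation B := (beta ^+ q).
Local Notation Psi := (@Psi L q n beta).
Implicit Types (x y c : L) (u v : 'rV[L]_n).

Lemma Tr_beta x : Tr q (beta * x) = beta * x + B * x ^+ q.
Proof. by rewrite /Tr exprMn. Qed.

Lemma TrZ c x : inFq q c -> Tr q (c * x) = c * Tr q x.
Proof. by rewrite /Tr exprMn => /eqP->; rewrite mulrDr. Qed.

Hypothesis card_L : #|L| = (q ^ 2)%N.

Lemma Tr_betaq x : Tr q (B * x) = B * x + beta * x ^+ q.
Proof. by rewrite /Tr exprMn exprqK. Qed.

Lemma Tr_cross x y :
  - Tr q (beta * x) * Tr q (B * y) + Tr q (B * x) * Tr q (beta * y)
  = (beta ^+ (2 * q) - beta ^+ 2) * (x * y ^+ q - x ^+ q * y).
Proof. by rewrite !Tr_beta !Tr_betaq mulnC exprM; ring. Qed.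

Lemma altip_Psi u v :
  altip q beta u v = pdot (2 * n) (vpoly (Psi u)) (vpoly (tau (Psi v))).
Proof.
rewrite /pdot (big_cat_nat _ (n := n)) //=; last lia.
have shift_range (F : nat -> L) :
    \sum_(n <= j < 2 * n) F j = \sum_(0 <= j < n) F (j + n)%N.
  by rewrite -{1}[n]add0n big_addn (_ : (2 * n - n = n)%N) //; lia.
rewrite shift_range -big_split /= /altip mulr_sumr big_mkord; apply: eq_bigr => i _.
have lt_in := ltn_ord i; have lt_inN : (i + n < 2 * n)%N by lia.
have /negbTE ge_in_n : ~~ (i + n < n)%N by lia.
rewrite !coef_vpoly !vget_tau !vget_Psi lt_in ge_in_n lt_inN addnK lt_in /=.
by rewrite !vgetE -Tr_cross; ring.
Qed.

Hypothesis pchar_q : [pchar L].-nat q.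

Lemma inFq_Tr x : inFq q (Tr q x).
Proof. by rewrite /inFq /Tr exprDn_pchar // exprqK // addrC. Qed.

Lemma TrD x y : Tr q (x + y) = Tr q x + Tr q y.
Proof. by rewrite /Tr exprDn_pchar // addrACA. Qed.

Lemma Psi_linear c u v : inFq q c -> Psi (c *: u + v) = c *: Psi u + Psi v.
Proof.
move=> c_Fq; apply: vget_ext => j _; rewrite vget_linear !vget_Psi !vget_linear.
case: ifP => _; first by rewrite mulrDr mulrCA TrD TrZ.
by case: ifP => _; rewrite ?mulr0 ?addr0 // mulrDr mulrCA TrD TrZ.
Qed.

Lemma PsiB u v : Psi (u - v) = Psi u - Psi v.
Proof.
have m1_Fq : inFq q (-1 : L) by apply: (inFqN pchar_q); rewrite /inFq expr1n.
by rewrite addrC -scaleN1r Psi_linear // scaleN1r addrC.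
Qed.

Lemma Psi0 : Psi 0 = 0.
Proof. by have := PsiB 0 0; rewrite !subrr. Qed.

Lemma Psi_sum k (c : 'I_k -> L) (w : 'I_k -> 'rV[L]_n) : (forall i, inFq q (c i)) ->
  Psi (\sum_(i < k) c i *: w i) = \sum_(i < k) c i *: Psi (w i).
Proof.
move=> c_Fq; elim/big_rec2: _ => [|i y1 y2 _ <-]; first exact: Psi0.
exact: Psi_linear.
Qed.

Lemma inFq_Psi u j : inFq q (vget (Psi u) j).
Proof.
rewrite vget_Psi; case: ifP => _; first exact: inFq_Tr.
by case: ifP => _; [exact: inFq_Tr | exact: inFq0].
Qed.

Hypothesis beta_frob : beta ^+ (2 * q) != beta ^+ 2.

Lemma beta_sqr_sub_neq0 : beta ^+ 2 - B ^+ 2 != 0.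
Proof. by rewrite subr_eq0 -exprM mulnC eq_sym. Qed.

Lemma Tr_pair_eq0 x : Tr q (beta * x) = 0 -> Tr q (B * x) = 0 -> x = 0.
Proof.
rewrite Tr_beta Tr_betaq => e1 e2.
have : (beta ^+ 2 - B ^+ 2) * x =
  beta * (beta * x + B * x ^+ q) - B * (B * x + beta * x ^+ q) by ring.
rewrite e1 e2 !mulr0 subrr => /eqP.
by rewrite mulf_eq0 (negbTE beta_sqr_sub_neq0) => /eqP.
Qed.

(* Cramer's rule for the system Tr(beta x) = s, Tr(beta^q x) = t. *)
Lemma Tr_pair_surj s t : inFq q s -> inFq q t ->
  exists x, Tr q (beta * x) = s /\ Tr q (B * x) = t.
Proof.
move=> /eqP s_Fq /eqP t_Fq; have D_neq0 := beta_sqr_sub_neq0.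
have D'_neq0 : B ^+ 2 - beta ^+ 2 != 0 by rewrite -oppr_eq0 opprB.
exists ((beta * s - B * t) / (beta ^+ 2 - B ^+ 2)); rewrite Tr_beta Tr_betaq.
have -> : ((beta * s - B * t) / (beta ^+ 2 - B ^+ 2)) ^+ q =
          (B * s - beta * t) / (B ^+ 2 - beta ^+ 2).
  rewrite exprMn exprVn !(exprNn_pchar, exprDn_pchar) // !exprMn exprqK //.
  by rewrite s_Fq t_Fq !expr2.
by split; field; rewrite ?D_neq0 ?D'_neq0.
Qed.

Lemma Psi_eq0 u : Psi u = 0 -> u = 0.
Proof.
move=> Pu0; apply/rowP => i; rewrite mxE -vgetE; have lt_in := ltn_ord i.
have := vget_Psi q beta u i; have := vget_Psi q beta u (i + n).
rewrite Pu0 !vget0 lt_in ifF ?ifT ?addnK /=; try lia.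
by move=> /esym Bu0 /esym bu0; apply: Tr_pair_eq0.
Qed.

Lemma Psi_inj : injective Psi.
Proof. by move=> u v Puv; apply/subr0_eq/Psi_eq0; rewrite PsiB Puv subrr. Qed.

Lemma Psi_surj (w : 'rV[L]_(2 * n)) : (forall j, inFq q (vget w j)) ->
  exists u, Psi u = w.
Proof.
move=> w_Fq.
have [f f_Tr] : exists f : 'I_n -> L, forall i,
    Tr q (beta * f i) = vget w i /\ Tr q (B * f i) = vget w (i + n).
  apply: (@fin_all_exists _ (fun=> L) (fun (i : 'I_n) x =>
    Tr q (beta * x) = vget w i /\ Tr q (B * x) = vget w (i + n))) => i.
  exact: Tr_pair_surj.
exists (\row_i f i); apply: vget_ext => j lt_jN; rewrite vget_Psi.
case: (ltnP j n) => [lt_jn | le_nj].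
  by rewrite (vget_lt _ lt_jn) mxE (f_Tr (Ordinal lt_jn)).1.
have lt_jn' : (j - n < n)%N by lia.
by rewrite lt_jN (vget_lt _ lt_jn') mxE (f_Tr (Ordinal lt_jn')).2 /= subnK.
Qed.

End TraceAndPsi.

Section AlternatingDual.
Variables (L : finFieldType) (q n : nat) (beta : L) (g : {poly L}) (k : nat).
Hypothesis card_L : #|L| = (q ^ 2)%N.
Hypothesis pchar_q : [pchar L].-nat q.
Hypothesis beta_frob : beta ^+ (2 * q) != beta ^+ 2.
Hypothesis g_dvd : g %| 'X^(2 * n) - 1.
Hypothesis n_gt0 : (0 < n)%N.
Hypothesis g_monic : g \is monic.
Hypothesis size_g : size g = k.+1.
Hypothesis g_Fq : forall i, inFq q g`_i.

Local Notation N := (2 * n)%N.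
Local Notation Psi := (@Psi L q n beta).
Local Notation shift i := (iter i (@sigma L N) (Vhstar n g)).

Lemma inFq_hstar j : inFq q (hstar n g)`_j.
Proof.
rewrite (coef_hstar g_dvd n_gt0 g_monic size_g); case: ifP => _; last exact: inFq0.
apply: (inFq_cofactor pchar_q (monic_neq0 g_monic)) => [|i|i].
- by rewrite mulrC hpolyM.
- exact: g_Fq.
- rewrite coefB coefXn coef1.
  by apply: inFqD => //; [exact: inFq_nat | apply: inFqN => //; exact: inFq_nat].
Qed.

Lemma inFq_tau_shift i j : (i < k)%N -> inFq q (vget (tau (shift i)) j).
Proof.
move=> lt_ik; have shift_Fq t : inFq q (vget (shift i) t).
  rewrite -coef_vpoly (vpoly_iter_sigma_Vhstar g_dvd n_gt0 g_monic size_g lt_ik).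
  by rewrite coefXnM; case: ifP => _; [exact: inFq0 | exact: inFq_hstar].
rewrite vget_tau; case: ifP => _; first exact: inFqN.
by case: ifP => _; [exact: shift_Fq | exact: inFq0].
Qed.

Lemma tau_shift_altdual i w : (i < k)%N -> Psi w = tau (shift i) ->
  altdual q beta g w.
Proof.
move=> lt_ik Pw u [_ [a [_ Pu]]].
rewrite altip_Psi // Pw tau_tau raddfN /= Pu.
rewrite (vpoly_iter_sigma_Vhstar g_dvd n_gt0 g_monic size_g lt_ik) -mulNr.
by apply: (pdot_code_hstar g_dvd n_gt0 g_monic size_g); rewrite size_opp size_polyXn.
Qed.

Lemma altdual_pdot_shifts_g v : altdual q beta g v ->
  forall j, (j < N - k)%N -> pdot N (vpoly (tau (Psi v))) ('X^j * g) = 0.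
Proof.
move=> v_dual j lt_jm; have le_kN := leq_k_2n g_dvd n_gt0 g_monic size_g.
have le_XjgN : (size ('X^j * g)%R <= N)%N.
  by apply: leq_trans (size_XnM_leq _ _) _; rewrite size_g; lia.
have [u Pu] : exists u, Psi u = \row_(t < N) ('X^j * g)`_t.
  apply: Psi_surj => // t; rewrite vget_row; case: ifP => _; last exact: inFq0.
  by rewrite coefXnM; case: ifP => _; [exact: inFq0 | exact: g_Fq].
have u_C : inC q beta g u.
  split=> [t|]; first by rewrite -vgetE; exact: inFq_Psi.
  exists 'X^j; split=> [i|]; first by rewrite coefXn; exact: inFq_nat.
  by rewrite Pu vpoly_row // modp_small // size_Xn_sub1 ?ltnS // muln_gt0.
by rewrite pdotC -(v_dual u u_C) altip_Psi // Pu vpoly_row.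
Qed.

Section Basis.
Variable ws : 'I_k -> 'rV[L]_n.
Hypothesis Psi_ws : forall i : 'I_k, Psi (ws i) = tau (shift i).

Lemma shift_preimages_free (c : 'I_k -> L) : (forall i, inFq q (c i)) ->
  \sum_(i < k) c i *: ws i = 0 -> forall i, c i = 0.
Proof.
move=> c_Fq sum_ws0; apply: (sum_shifts_eq0 (hstar_neq0 g_dvd n_gt0 g_monic size_g)).
rewrite -(vpoly_sum_shifts g_dvd n_gt0 g_monic size_g); apply/eqP.
rewrite raddf_eq0; last exact: vpoly_inj.
apply/eqP/tau_inj; rewrite linear_sum raddf0 /=.
under eq_bigr => i _ do rewrite linearZ /= -Psi_ws.
by rewrite -Psi_sum // sum_ws0 Psi0.
Qed.

Lemma altdual_span_shift_preimages v : altdual q beta g v ->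
  exists c : 'I_k -> L, (forall i, inFq q (c i)) /\ v = \sum_(i < k) c i *: ws i.
Proof.
move=> v_dual; set Y := vpoly (tau (Psi v)).
have [c le_ck Yc] := hstar_span g_dvd n_gt0 g_monic size_g (size_poly _ _)
  (altdual_pdot_shifts_g v_dual).
have c_Fq i : inFq q c`_i.
  apply: (inFq_cofactor pchar_q (hstar_neq0 g_dvd n_gt0 g_monic size_g)
    (etrans (mulrC _ _) (esym Yc))) => [|t]; first exact: inFq_hstar.
  rewrite coef_vpoly vget_tau; case: ifP => _; first by apply: inFqN => //; apply: inFq_Psi.
  by case: ifP => _; [exact: inFq_Psi | exact: inFq0].
exists (fun i => - c`_i); split=> [i|]; first exact: inFqN.
apply: (Psi_inj card_L pchar_q beta_frob); rewrite Psi_sum // => [|i]; last exact: inFqN.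
have tau_Pv : tau (Psi v) = \sum_(i < k) c`_i *: shift i.
  apply: vpoly_inj; rewrite (vpoly_sum_shifts g_dvd n_gt0 g_monic size_g).
  by apply: etrans Yc _; rewrite -[c in LHS](coefK_leq le_ck) poly_mull.
have -> : Psi v = - tau (tau (Psi v)) by rewrite tau_tau opprK.
rewrite tau_Pv linear_sum -sumrN; apply: eq_bigr => i _.
by rewrite linearZ /= Psi_ws scaleNr.
Qed.

Lemma shift_preimages_basis : Fq_basis q (altdual q beta g) ws.
Proof.
split=> [i||]; last exact: altdual_span_shift_preimages.
  exact: (tau_shift_altdual (ltn_ord i)).
exact: shift_preimages_free.
Qed.

End Basis.
End AlternatingDual.

Lemma pnat_pchar_prime_power (F : finFieldType) p e q :
  prime p -> q = (p ^ e.+1)%N -> #|F| = (q ^ 2)%N -> [pchar F].-nat q.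
Proof.
move=> p_pr -> card_F.
have p_char : p \in [pchar F].
  by apply: (card_finPcharP (n := (e.+1 * 2)%N)); rewrite // card_F -expnM.
by rewrite pnatX (pnatE _ p_pr) p_char.
Qed.

Lemma primitive_root_exp2q_neq (F : fieldType) q (beta : F) : (1 < q)%N ->
  (q ^ 2 - 1).-primitive_root beta -> beta ^+ (2 * q) != beta ^+ 2.
Proof.
move=> q_gt1 beta_prim; have order_gt0 : (0 < q ^ 2 - 1)%N by rewrite expnS expn1; nia.
have beta_neq0 : beta != 0.
  apply/eqP => beta0; have := prim_expr_order beta_prim.
  by rewrite beta0 expr0n gtn_eqF // mulr0n => /esym/eqP; rewrite oner_eq0.
apply/eqP => frob_beta.
have : beta ^+ (2 * q - 2) = 1.
  apply: (mulIf (expf_neq0 2 beta_neq0)); rewrite -exprD subnK ?mul1r //; lia.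
move/eqP; rewrite -(prim_order_dvd beta_prim) => /dvdn_leq.
rewrite expnS expn1; nia.
Qed.

Theorem theorem4p5 (L : finFieldType) (q n : nat) (beta : L) (g : {poly L}) :
  (exists p e : nat, prime p /\ q = (p ^ e.+1)%N) ->
  #|L| = (q ^ 2)%N ->
  (q ^ 2 - 1)%N.-primitive_root beta ->
  (0 < n)%N ->
  g \is monic ->
  (forall i, inFq q g`_i) ->
  g %| 'X^(2 * n) - 1 ->
  g != 'X^(2 * n) - 1 ->
  let k := (size g).-1 in
  let target := fun i : nat => tau (iter i (@sigma L (2 * n)) (Vhstar n g)) in
  (forall i : 'I_k, exists w : 'rV[L]_n, Psi q beta w = target i) /\
  (forall ws : 'I_k -> 'rV[L]_n,
     (forall i : 'I_k, Psi q beta (ws i) = target i) ->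
     Fq_basis q (altdual q beta g) ws).
Proof.
move=> [p [e [p_pr q_pe]]] card_L beta_prim n_gt0 g_monic g_Fq g_dvd _ k target.
have pchar_q := pnat_pchar_prime_power p_pr q_pe card_L.
have q_gt1 : (1 < q)%N.
  by have := card_finNzRing_gt1 L; rewrite card_L -{1}(exp1n 2) ltn_exp2r.
have beta_frob := primitive_root_exp2q_neq q_gt1 beta_prim.
have size_g : size g = k.+1 by rewrite prednK // size_poly_gt0 monic_neq0.
split=> [i | ws Psi_ws]; last exact: shift_preimages_basis Psi_ws.
apply: Psi_surj => // j.
exact: inFq_tau_shift pchar_q g_dvd n_gt0 g_monic size_g g_Fq _ _ (ltn_ord i).
Qed.
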